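(* Let $\sigma$ be one of the two numbers $\sigma_+$ or $\sigma_-$ (at a given point), and put $D=1+F\sigma-G^2\sigma^2$. Then the following conditions are mutually equivalent: (a) $N^2=4MP$ (i.e. $\sigma_+=\sigma_-$, and then $\sigma=\frac{N}{2M}$); (b) $\mathcal{L}_F\mathcal{L}_{GG}=N$ and $\mathcal{L}_F\mathcal{L}_{FG}=PG$; (c) $DM=\mathcal{L}_F^2$, $DN=2\mathcal{L}_F^2\sigma$ and $DP=\mathcal{L}_F^2\sigma^2$; (d) $2D\mathcal{L}_{FF}=\mathcal{L}_F\sigma(1+F\sigma)$, $D\mathcal{L}_{GG}=2\mathcal{L}_F\sigma$ and $D\mathcal{L}_{FG}=\mathcal{L}_F G\sigma^2$.
   Context: Let $F_{ab}$ be an antisymmetric tensor (background electromagnetic field) on an oriented 4-dimensional Lorentzian manifold with metric $g_{ab}$ of signature $(-,+,+,+)$; indices are raised and lowered with $g$, $\varepsilon_{abcd}$ is the volume form and ${}^{*}F_{ab}=\frac12\varepsilon_{abcd}F^{cd}$. Its invariants are $F=\frac12F_{ab}F^{ab}$ and $G=-\frac14F_{ab}\,{}^{*}F^{ab}$. Let $\mathcal{L}(F,G)$ be a smooth Lagrangian; $\mathcal{L}_F,\mathcal{L}_G,\mathcal{L}_{FF},\mathcal{L}_{FG},\mathcal{L}_{GG}$ denote its partial derivatives evaluated at the background invariants. Define $M=\mathcal{L}_F^2+2\mathcal{L}_F\mathcal{L}_{FG}G-\frac12\mathcal{L}_F\mathcal{L}_{GG}F-PG^2$, $N=2\mathcal{L}_F\mathcal{L}_{FF}+\frac12\mathcal{L}_F\mathcal{L}_{GG}-PF$,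 $P=\mathcal{L}_{FF}\mathcal{L}_{GG}-\mathcal{L}_{FG}^2$, and $\sigma_\pm=\frac{N}{2M}\pm\sqrt{\frac{N^2}{4M^2}-\frac{P}{M}}$ (these are real). Standing assumptions: $\mathcal{L}_F\neq0$, $M\neq0$, and $1+\sigma_\pm F-\sigma_\pm^2G^2\neq0$ for both signs. *)

(* real numbers. All quantities are pointwise scalars:
   F, G are the background invariants, LF, LFF, LFG, LGG the partial
   derivatives of the Lagrangian evaluated at (F, G). *)
From Stdlib Require Import Reals.
Open Scope R_scope.

Definition P_ (LFF LFG LGG : R) : R := LFF * LGG - LFG ^ 2.

Definition M_ (F G LF LFF LFG LGG : R) : R :=
  LF ^ 2 + 2 * LF * LFG * G - (1/2) * LF * LGG * F - P_ LFF LFG LGG * G ^ 2.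

Definition N_ (F G LF LFF LFG LGG : R) : R :=
  2 * LF * LFF + (1/2) * LF * LGG - P_ LFF LFG LGG * F.

Definition disc_ (F G LF LFF LFG LGG : R) : R :=
  N_ F G LF LFF LFG LGG ^ 2 / (4 * M_ F G LF LFF LFG LGG ^ 2)
  - P_ LFF LFG LGG / M_ F G LF LFF LFG LGG.

Definition sigma_plus (F G LF LFF LFG LGG : R) : R :=
  N_ F G LF LFF LFG LGG / (2 * M_ F G LF LFF LFG LGG)
  + sqrt (disc_ F G LF LFF LFG LGG).

Definition sigma_minus (F G LF LFF LFG LGG : R) : R :=
  N_ F G LF LFF LFG LGG / (2 * M_ F G LF LFF LFG LGG)
  - sqrt (disc_ F G LF LFF LFG LGG).

(* The discriminant is a sum of squares:
   N^2 - 4MP = (LF LGG - N)^2 + 4 (LF LFG - P G)^2,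
   so (a) and (b) are equivalent.  Under (a) both roots equal N/(2M), and (b)
   turns D M into LF^2, from which the other two identities of (c) follow by
   scaling; conversely (c) gives D^2 (N^2 - 4MP) = (DN)^2 - 4 (DM)(DP) = 0.
   Finally, (d) just expresses LFF, LGG, LFG through sigma, and substituting
   these into the definitions of N and P yields (b), while (b) and (c) give
   back (d) after multiplying by LF. *)
From Stdlib Require Import Reals Lra Psatz.
Open Scope R_scope.

Section Proposition1.
Variables F G LF LFF LFG LGG : R.
Local Notation M := (M_ F G LF LFF LFG LGG).
Local Notation N := (N_ F G LF LFF LFG LGG).
Local Notation P := (P_ LFF LFG LGG).
Local Notation D s := (1 + F * s - G ^ 2 * s ^ 2).

Definition second_derivatives_constraints : Prop :=
  LF * LGG = N /\ LF * LFG = P * G.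

Definition MNP_identities (s : R) : Prop :=
  D s * M = LF ^ 2 /\ D s * N = 2 * LF ^ 2 * s /\ D s * P = LF ^ 2 * s ^ 2.

Definition second_derivatives_identities (s : R) : Prop :=
  2 * D s * LFF = LF * s * (1 + F * s) /\ D s * LGG = 2 * LF * s
  /\ D s * LFG = LF * G * s ^ 2.

Lemma discriminant_sum_of_squares :
  N ^ 2 - 4 * M * P = (LF * LGG - N) ^ 2 + 4 * (LF * LFG - P * G) ^ 2.
Proof. unfold M_, N_, P_. field. Qed.

Lemma double_root_iff_constraints :
  N ^ 2 = 4 * M * P <-> second_derivatives_constraints.
Proof.
  pose proof discriminant_sum_of_squares as Hsq.
  unfold second_derivatives_constraints. split.
  - intro Hdouble.
    pose proof (pow2_ge_0 (LF * LGG - N)).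
    pose proof (pow2_ge_0 (LF * LFG - P * G)).
    assert (Hg : (LF * LGG - N) ^ 2 = 0) by lra.
    assert (Hh : (LF * LFG - P * G) ^ 2 = 0) by lra.
    split; nra.
  - intros [Hg Hh]. rewrite Hg, Hh in Hsq. lra.
Qed.

Lemma sigma_double_root (s : R) : M <> 0 -> N ^ 2 = 4 * M * P ->
  s = sigma_plus F G LF LFF LFG LGG \/ s = sigma_minus F G LF LFF LFG LGG ->
  s = N / (2 * M).
Proof.
  intros HM Hdouble Hs.
  assert (Hdisc : disc_ F G LF LFF LFG LGG = 0).
  { unfold disc_. rewrite Hdouble. field. exact HM. }
  unfold sigma_plus, sigma_minus in Hs. rewrite Hdisc, sqrt_0 in Hs.
  destruct Hs; lra.
Qed.

Lemma MNP_identities_double_root : M <> 0 -> N ^ 2 = 4 * M * P ->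
  MNP_identities (N / (2 * M)).
Proof.
  intros HM Hdouble.
  destruct (proj1 double_root_iff_constraints Hdouble) as [Hg Hh].
  set (s := N / (2 * M)).
  assert (HP : P = N ^ 2 / (4 * M)) by (rewrite Hdouble; field; exact HM).
  assert (HDM : D s * M = LF ^ 2).
  { transitivity (M + F * N / 2 - G ^ 2 * P).
    - unfold s. rewrite HP. field. exact HM.
    - replace M with (LF ^ 2 + 2 * G * (LF * LFG) - F * (LF * LGG) / 2 - P * G ^ 2)
        by (unfold M_; field).
      rewrite Hg, Hh. field. }
  repeat split.
  - exact HDM.
  - replace (D s * N) with (D s * M * (N / M)) by (field; exact HM).
    rewrite HDM. unfold s. field. exact HM.
  - replace (D s * P) with (D s * M * (P / M)) by (field; exact HM).
    rewrite HDM, HP. unfold s. field. exact HM.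
Qed.

Lemma double_root_of_MNP_identities (s : R) : D s <> 0 ->
  MNP_identities s -> N ^ 2 = 4 * M * P.
Proof.
  intros HD [HDM [HDN HDP]].
  assert (Hzero : D s ^ 2 * (N ^ 2 - 4 * M * P) = 0).
  { replace (D s ^ 2 * (N ^ 2 - 4 * M * P))
      with ((D s * N) ^ 2 - 4 * (D s * M) * (D s * P)) by ring.
    rewrite HDM, HDN, HDP. ring. }
  apply Rmult_integral in Hzero as [Hzero | Hzero].
  - exact (False_ind _ (pow_nonzero _ 2 HD Hzero)).
  - lra.
Qed.

Lemma second_derivatives_identities_of_constraints (s : R) : LF <> 0 ->
  second_derivatives_constraints -> MNP_identities s ->
  second_derivatives_identities s.
Proof.
  intros HLF [Hg Hh] [_ [HDN HDP]].
  assert (HN : N = 2 * (LF * LFF) + LF * LGG / 2 - P * F) by (unfold N_; field).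
  assert (HLFF : 2 * (LF * LFF) = N / 2 + P * F) by lra.
  repeat split; apply (Rmult_eq_reg_l LF); try exact HLF.
  - replace (LF * (2 * D s * LFF)) with (D s * (2 * (LF * LFF))) by ring.
    rewrite HLFF.
    replace (D s * (N / 2 + P * F)) with (D s * N / 2 + D s * P * F) by field.
    rewrite HDN, HDP. field.
  - replace (LF * (D s * LGG)) with (D s * (LF * LGG)) by ring.
    rewrite Hg, HDN. ring.
  - replace (LF * (D s * LFG)) with (D s * (LF * LFG)) by ring.
    rewrite Hh. replace (D s * (P * G)) with (D s * P * G) by ring.
    rewrite HDP. ring.
Qed.

Lemma constraints_of_second_derivatives_identities (s : R) : D s <> 0 ->
  second_derivatives_identities s -> second_derivatives_constraints.
Proof.
  intros HD [Hf [Hg Hh]].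
  set (d := D s) in *.
  assert (HLFF : LFF = LF * s * (1 + F * s) / (2 * d))
    by (rewrite <- Hf; field; exact HD).
  assert (HLGG : LGG = 2 * LF * s / d) by (rewrite <- Hg; field; exact HD).
  assert (HLFG : LFG = LF * G * s ^ 2 / d) by (rewrite <- Hh; field; exact HD).
  unfold second_derivatives_constraints, N_, P_.
  rewrite HLFF, HLGG, HLFG. unfold d in *.
  split; field; intro Hzero; apply HD; rewrite <- Hzero; ring.
Qed.

End Proposition1.

Theorem proposition1 (F G LF LFF LFG LGG : R)
  (hdisc : 0 <= disc_ F G LF LFF LFG LGG)
  (hLF : LF <> 0)
  (hM : M_ F G LF LFF LFG LGG <> 0)
  (hDp : 1 + sigma_plus F G LF LFF LFG LGG * F
           - sigma_plus F G LF LFF LFG LGG ^ 2 * G ^ 2 <> 0)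
  (hDm : 1 + sigma_minus F G LF LFF LFG LGG * F
           - sigma_minus F G LF LFF LFG LGG ^ 2 * G ^ 2 <> 0)
  (sigma : R)
  (hsigma : sigma = sigma_plus F G LF LFF LFG LGG
            \/ sigma = sigma_minus F G LF LFF LFG LGG) :
  let M := M_ F G LF LFF LFG LGG in
  let N := N_ F G LF LFF LFG LGG in
  let P := P_ LFF LFG LGG in
  let D := 1 + F * sigma - G ^ 2 * sigma ^ 2 in
  let cond_a := N ^ 2 = 4 * M * P in
  let cond_b := LF * LGG = N /\ LF * LFG = P * G in
  let cond_c := D * M = LF ^ 2 /\ D * N = 2 * LF ^ 2 * sigma
                /\ D * P = LF ^ 2 * sigma ^ 2 in
  let cond_d := 2 * D * LFF = LF * sigma * (1 + F * sigma)
                /\ D * LGG = 2 * LF * sigma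
                /\ D * LFG = LF * G * sigma ^ 2 in
  (cond_a <-> cond_b) /\ (cond_a <-> cond_c) /\ (cond_a <-> cond_d).
Proof.
  intros M N P D cond_a cond_b cond_c cond_d.
  assert (HD : D <> 0).
  { unfold D. destruct hsigma as [-> | ->]; intro Hzero;
      [apply hDp | apply hDm]; rewrite <- Hzero; ring. }
  pose proof (double_root_iff_constraints F G LF LFF LFG LGG) as Hab.
  assert (Hac : cond_a -> cond_c).
  { intro Ha. unfold cond_c, D.
    rewrite (sigma_double_root F G LF LFF LFG LGG sigma hM Ha hsigma).
    exact (MNP_identities_double_root F G LF LFF LFG LGG hM Ha). }
  split; [exact Hab | split; split].
  - exact Hac.
  - exact (double_root_of_MNP_identities F G LF LFF LFG LGG sigma HD).
  - intro Ha. apply second_derivatives_identities_of_constraints;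
      [exact hLF | exact (proj1 Hab Ha) | exact (Hac Ha)].
  - intro Hd. apply Hab.
    exact (constraints_of_second_derivatives_identities F G LF LFF LFG LGG sigma HD Hd).
Qed.
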